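(* Let $k$ be a field and let $r,s\in\mathbb{Z}$ be coprime. Then $r_\epsilon$ and $s_\epsilon$ generate the unit ideal of the Grothendieck–Witt ring $GW(k)$.
   Context: For $n\ge0$, $n_\epsilon:=\sum_{i=1}^n\langle(-1)^{i-1}\rangle\in GW(k)$, where $\langle a\rangle$ is the class of the rank one form $ax^2$; for $n<0$ one sets $n_\epsilon:=\epsilon\cdot(-n)_\epsilon$ with $\epsilon=-\langle-1\rangle$ (Morel's convention). *)

(* Grothendieck-Witt ring GW(k) of a field k, built as the
   Grothendieck group (group completion) of the monoid of isometry classes of
   nondegenerate symmetric bilinear forms under orthogonal sum, with
   multiplication induced by the tensor (Kronecker) product.
   Elements of GW(k) are represented as formal differences [P] - [N]
   (pairs of forms), and equality in GW(k) is the relation gw_eq. *)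
From HB Require Import structures.
From mathcomp Require Import all_boot all_order all_algebra.
From mathcomp Require Import mxtens.
Set Implicit Arguments.
Unset Strict Implicit.
Unset Printing Implicit Defensive.
Import Order.TTheory GRing.Theory Num.Theory.
Local Open Scope ring_scope.

Section GW.
Variable k : fieldType.

(* A (possibly degenerate) bilinear form on k^n, given by its Gram matrix. *)
Definition form := {n : nat & 'M[k]_n}.

Definition Form n (A : 'M[k]_n) : form := existT _ n A.

Definition valid_form (A : form) : Prop :=
  (projT2 A)^T = projT2 A /\ \det (projT2 A) != 0.

Definition isometric (A B : form) : Prop :=
  exists e : projT1 A = projT1 B,
  exists2 P : 'M[k]_(projT1 B), P \in unitmx &
    P *m castmx (e, e) (projT2 A) *m P^T = projT2 B.

Definition osum (A B : form) : form :=
  Form (block_mx (projT2 A) 0 0 (projT2 B)).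

Definition otens (A B : form) : form := Form (projT2 A *t projT2 B).

Definition form0 : form := Form (0 : 'M[k]_0).
Definition diag1 (a : k) : form := Form (a%:M : 'M[k]_1).

(* formal differences P - N *)
Definition gw := (form * form)%type.

Definition valid_gw (x : gw) : Prop := valid_form x.1 /\ valid_form x.2.

Definition gw_eq (x y : gw) : Prop :=
  exists2 E : form, valid_form E &
    isometric (osum (osum x.1 y.2) E) (osum (osum y.1 x.2) E).

Definition gw_add (x y : gw) : gw := (osum x.1 y.1, osum x.2 y.2).
Definition gw_mul (x y : gw) : gw :=
  (osum (otens x.1 y.1) (otens x.2 y.2), osum (otens x.1 y.2) (otens x.2 y.1)).
Definition gw_one : gw := (diag1 1, form0).
Definition gw_opp (x : gw) : gw := (x.2, x.1).
Definition gw_of (A : form) : gw := (A, form0).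

Definition angle (a : k) : gw := gw_of (diag1 a).

Fixpoint nat_eps (n : nat) : gw :=
  match n with
  | 0 => gw_of form0
  | m.+1 => gw_add (nat_eps m) (angle ((-1) ^+ m))
  end.

Definition epsilon : gw := gw_opp (angle (-1)).

(* n_epsilon for n : int (Morel's convention) *)
Definition int_eps (n : int) : gw :=
  match n with
  | Posz m => nat_eps m
  | Negz m => gw_mul epsilon (nat_eps m.+1)
  end.

Definition gw_unit_ideal (x y : gw) : Prop :=
  exists a b : gw, valid_gw a /\ valid_gw b /\
    gw_eq (gw_add (gw_mul a x) (gw_mul b y)) gw_one.

End GW.

From Pilot Require Import Defs.
From mathcomp Require Import all_boot all_order all_algebra perm mxtens zify ring.

(* Every element of GW(k) built from <1> and <-1> is a difference of diagonal
   forms with entries +-1, and by Sylvester's law such a difference is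
   determined in GW(k) by its virtual rank and signature; conversely every
   pair (n, sg) with n = sg mod 2 occurs.  Rank and signature are additive and
   multiplicative, and n_eps has rank n and signature n mod 2.  It thus
   suffices to find integers a = alpha, b = beta (mod 2) with a r + b s = 1 and
   alpha (r mod 2) + beta (s mod 2) = 1.  If r is odd and u r + v s = 1, then
   a = 1 - (r - 1) u, b = - (r - 1) v, alpha = 1, beta = 0 will do. *)
Set Implicit Arguments.
Unset Strict Implicit.
Unset Printing Implicit Defensive.
Import Order.TTheory GRing.Theory Num.Theory.
Local Open Scope ring_scope.

Lemma count_bool (s : seq bool) : (count_mem false s + count_mem true s)%N = size s.
Proof. by elim: s => [|[] s IH] //=; rewrite -IH ?addnS. Qed.

Lemma sum_sign_count (s : seq bool) :
  \sum_(b <- s) (-1) ^+ b = (count_mem false s)%:Z - (count_mem true s)%:Z :> int.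
Proof. by elim: s => [|[] s IH]; rewrite ?big_nil ?big_cons ?IH //=; lia. Qed.

Lemma perm_eq_sum_sign (s t : seq bool) : size s = size t ->
  \sum_(b <- s) (-1) ^+ b = \sum_(b <- t) (-1) ^+ b :> int -> perm_eq s t.
Proof.
rewrite !sum_sign_count -(count_bool s) -(count_bool t) => Est Esg.
by apply/allP => -[] _; apply/eqP; move: Est Esg; rewrite /=; lia.
Qed.

Section SignForms.
Variable k : fieldType.

Definition sign_mx n (f : 'I_n -> bool) : 'M[k]_n := diag_mx (\row_i (-1) ^+ f i).

Definition signature n (f : 'I_n -> bool) : int := \sum_(i < n) (-1) ^+ f i.

Definition sign_form (A : Defs.form k) (sg : int) : Prop :=
  exists2 f : 'I_(projT1 A) -> bool, projT2 A = sign_mx f & signature f = sg.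

Lemma signature_tuple n (f : 'I_n -> bool) :
  signature f = \sum_(b <- [tuple f i | i < n]) (-1) ^+ b.
Proof. by rewrite /= big_map big_enum. Qed.

Lemma sign_form_valid A sg : sign_form A sg -> valid_form A.
Proof.
case: A => n M [f /= -> _]; split; first exact: tr_diag_mx.
by rewrite det_diag; apply/prodf_neq0 => i _; rewrite mxE signr_eq0.
Qed.

Lemma sign_forms_isometric A B sg :
  projT1 A = projT1 B -> sign_form A sg -> sign_form B sg -> isometric A B.
Proof.
case: A => n M; case: B => n' N /= en; subst n'.
move=> [f /= -> sg_f] [g /= -> sg_g].
exists erefl; rewrite castmx_id.
have /tuple_permP[s /val_inj fs] : perm_eq [tuple g i | i < n] [tuple f i | i < n].
  by apply: perm_eq_sum_sign; rewrite ?size_tuple // -!signature_tuple sg_f sg_g.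
have gs i : g i = f (s i) by have := congr1 (fun t => tnth t i) fs; rewrite !tnth_mktuple.
exists (perm_mx s); first exact: unitmx_perm.
rewrite tr_perm_mx -col_permE -row_permE; apply/matrixP => i j.
by rewrite !mxE (inj_eq perm_inj) gs.
Qed.

Lemma sign_form_osum A B sgA sgB :
  sign_form A sgA -> sign_form B sgB -> sign_form (osum A B) (sgA + sgB).
Proof.
case: A => n M; case: B => n' N [f /= -> <-] [g /= -> <-].
exists (fun i => match split i with inl a => f a | inr b => g b end).
  rewrite /= /sign_mx -diag_mx_row; congr diag_mx; apply/matrixP => i j.
  by rewrite !mxE; case: (split j) => a; rewrite mxE.
rewrite /signature big_split_ord /=.
by congr (_ + _); apply: eq_bigr => i _; rewrite ?(unsplitK (inl i)) ?(unsplitK (inr i)).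
Qed.

Lemma sign_form_otens A B sgA sgB :
  sign_form A sgA -> sign_form B sgB -> sign_form (otens A B) (sgA * sgB).
Proof.
case: A => n M; case: B => n' N [f /= -> <-] [g /= -> <-].
pose h i := f (mxtens_unindex i).1 (+) g (mxtens_unindex i).2.
exists h.
  apply/matrixP => i j /=.
  case: (mxtens_indexP i) => a b; case: (mxtens_indexP j) => c d.
  rewrite tensmxE !mxE /h mxtens_indexK (inj_eq (can_inj (@mxtens_indexK _ _))).
  rewrite xpair_eqE signr_addb.
  by case: (a == c); case: (b == d); rewrite ?mulr0n ?mulr1n ?mulr0 ?mul0r.
by rewrite /signature mulr_sum; apply: eq_bigr => i _; rewrite signr_addb.
Qed.

Lemma sign_form_form0 : sign_form (form0 k) 0.
Proof. by exists (fun=> false); [apply/matrixP => -[] | rewrite /signature big_ord0]. Qed.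

Lemma sign_form_diag1 (b : bool) : sign_form (diag1 ((-1) ^+ b)) ((-1) ^+ b).
Proof.
exists (fun=> b); last by rewrite /signature big_ord1.
by apply/matrixP => i j; rewrite !ord1 !mxE.
Qed.

Lemma sign_form_const n (b : bool) :
  sign_form (Form (sign_mx (fun _ : 'I_n => b))) ((-1) ^+ b *+ n).
Proof. by exists (fun=> b); rewrite // /signature sumr_const card_ord. Qed.

Lemma sign_form_exists (p m : nat) :
  exists2 A, projT1 A = (p + m)%N & sign_form A (p%:Z - m%:Z).
Proof.
pose A := osum (Form (sign_mx (fun _ : 'I_p => false)))
               (Form (sign_mx (fun _ : 'I_m => true))).
exists A => //; have := sign_form_osum (sign_form_const p false) (sign_form_const m true).
by rewrite expr0 expr1 mulNrn !natz.
Qed.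

Definition rank_sig (x : gw k) (n sg : int) : Prop :=
  exists sg1 sg2, [/\ sign_form x.1 sg1, sign_form x.2 sg2,
    n = (projT1 x.1)%:Z - (projT1 x.2)%:Z & sg = sg1 - sg2].

Lemma rank_sig_valid x n sg : rank_sig x n sg -> valid_gw x.
Proof.
case=> [sg1 [sg2 [x1 x2 _ _]]].
by split; [apply: sign_form_valid x1 | apply: sign_form_valid x2].
Qed.

Lemma rank_sig_gw_eq x y n sg : rank_sig x n sg -> rank_sig y n sg -> gw_eq x y.
Proof.
case=> [a1 [a2 [xa1 xa2 nx sx]]] [b1 [b2 [yb1 yb2 ny sy]]].
exists (form0 k); first exact: sign_form_valid sign_form_form0.
apply: (sign_forms_isometric (sg := a1 + b2 + 0)).
- by rewrite /=; lia.
- exact: sign_form_osum (sign_form_osum xa1 yb2) sign_form_form0.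
- have -> : a1 + b2 + 0 = b1 + a2 + 0 by lia.
  exact: sign_form_osum (sign_form_osum yb1 xa2) sign_form_form0.
Qed.

Lemma rank_sig_gw_of A sg : sign_form A sg -> rank_sig (gw_of A) (projT1 A) sg.
Proof. by exists sg, 0; split; rewrite ?subr0 //; apply: sign_form_form0. Qed.

Lemma rank_sig_opp x n sg : rank_sig x n sg -> rank_sig (gw_opp x) (- n) (- sg).
Proof. by case=> [sg1 [sg2 [x1 x2 -> ->]]]; exists sg2, sg1; split; rewrite // opprB. Qed.

Lemma rank_sig_add x y n n' sg sg' : rank_sig x n sg -> rank_sig y n' sg' ->
  rank_sig (gw_add x y) (n + n') (sg + sg').
Proof.
case=> [a1 [a2 [xa1 xa2 -> ->]]] [b1 [b2 [yb1 yb2 -> ->]]].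
exists (a1 + b1), (a2 + b2); split; try exact: sign_form_osum.
  by rewrite /= !PoszD; ring.
by ring.
Qed.

Lemma rank_sig_mul x y n n' sg sg' : rank_sig x n sg -> rank_sig y n' sg' ->
  rank_sig (gw_mul x y) (n * n') (sg * sg').
Proof.
case=> [a1 [a2 [xa1 xa2 -> ->]]] [b1 [b2 [yb1 yb2 -> ->]]].
exists (a1 * b1 + a2 * b2), (a1 * b2 + a2 * b1).
split; try apply: sign_form_osum; try apply: sign_form_otens => //.
  by rewrite /= !PoszD !PoszM; ring.
by ring.
Qed.

Lemma rank_sig_exists (n sg : int) : (n = sg %[mod 2])%Z -> exists x, rank_sig x n sg.
Proof.
move=> nsg; have [p [m [-> ->]]] : exists p m : int, n = p + m /\ sg = p - m.
  by exists ((n + sg) %/ 2)%Z, ((n - sg) %/ 2)%Z; lia.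
have [A nA sA] := sign_form_exists `|Num.max p 0| `|Num.max m 0|.
have [B nB sB] := sign_form_exists `|Num.max (- p) 0| `|Num.max (- m) 0|.
exists (A, B); do 2 eexists; split; [exact: sA | exact: sB | rewrite /= nA nB; lia | lia].
Qed.

Lemma rank_sig_one : rank_sig (gw_one k) 1 1.
Proof. exact: rank_sig_gw_of (sign_form_diag1 false). Qed.

Lemma rank_sig_epsilon : rank_sig (epsilon k) (-1) 1.
Proof. by have := rank_sig_opp (rank_sig_gw_of (sign_form_diag1 true)); rewrite opprK. Qed.

Lemma rank_sig_nat_eps n : rank_sig (nat_eps k n) n (odd n).
Proof.
elim: n => [|n IH]; first exact: rank_sig_gw_of sign_form_form0.
have := rank_sig_add IH (rank_sig_gw_of (sign_form_diag1 (odd n))).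
rewrite [in diag1 _]signr_odd -PoszD addn1.
by have -> : (odd n)%:Z + (-1) ^+ odd n = odd n.+1 by rewrite /=; case: (odd n).
Qed.

Lemma rank_sig_int_eps r : rank_sig (int_eps k r) r (r %% 2)%Z.
Proof.
case: r => n; first by rewrite modz_nat modn2; apply: rank_sig_nat_eps.
have -> : (Negz n %% 2)%Z = odd n.+1.
  by have := odd_double_half n.+1; rewrite NegzE; lia.
by have := rank_sig_mul rank_sig_epsilon (rank_sig_nat_eps n.+1); rewrite mulN1r mul1r -NegzE.
Qed.

Lemma gw_unit_ideal_rank_sig x y n n' sg sg' (a b alpha beta : int) :
  rank_sig x n sg -> rank_sig y n' sg' ->
  (a = alpha %[mod 2])%Z -> (b = beta %[mod 2])%Z ->
  a * n + b * n' = 1 -> alpha * sg + beta * sg' = 1 -> gw_unit_ideal x y.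
Proof.
move=> xr yr /rank_sig_exists[u ur] /rank_sig_exists[v vr] en esg.
exists u, v; split; first exact: rank_sig_valid ur.
split; first exact: rank_sig_valid vr.
apply: rank_sig_gw_eq rank_sig_one.
by rewrite -{1}en -esg; apply: rank_sig_add; apply: rank_sig_mul.
Qed.

End SignForms.

Lemma coprimez_parity_bezout (r s : int) : coprimez r s ->
  exists a b alpha beta : int, [/\ (a = alpha %[mod 2])%Z, (b = beta %[mod 2])%Z,
    a * r + b * s = 1 & alpha * (r %% 2)%Z + beta * (s %% 2)%Z = 1].
Proof.
wlog r_odd : r s / (r %% 2)%Z = 1.
  move=> gen crs; have [/gen/(_ crs)// | r_even] : (r %% 2)%Z = 1 \/ (r %% 2)%Z = 0.
    by lia.
  have s_odd : (s %% 2)%Z = 1.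
    suff : (s %% 2)%Z <> 0 by lia.
    move=> /dvdz_mod0P s2; move/dvdz_mod0P: r_even => r2.
    by have := dvdz_gcd 2 r s; rewrite (eqP crs) r2 s2.
  rewrite coprimez_sym in crs.
  have [a [b [alpha [beta [ea eb ers esg]]]]] := gen s r s_odd crs.
  by exists b, a, beta, alpha; split; rewrite // addrC.
move=> /coprimezP[[u v] /= uv].
have [j er] : exists j, r = j * 2 + 1 by exists (r %/ 2)%Z; rewrite {1}(divz_eq r 2) r_odd.
exists (1 - j * u * 2), (- (j * v) * 2), 1, 0; split.
- by rewrite addrC -mulNr modzMDl.
- by rewrite modzMl mod0z.
- rewrite er in uv *.
  have -> : (1 - j * u * 2) * (j * 2 + 1) + - (j * v) * 2 * s
          = j * 2 + 1 - j * 2 * (u * (j * 2 + 1) + v * s) by ring.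
  by rewrite uv; ring.
- by rewrite r_odd mul1r mul0r addr0.
Qed.

Theorem lemma2p10 (k : fieldType) (r s : int) :
  coprimez r s ->
  gw_unit_ideal (int_eps k r) (int_eps k s).
Proof.
move=> /coprimez_parity_bezout[a [b [alpha [beta [ea eb ers esg]]]]].
exact: gw_unit_ideal_rank_sig (rank_sig_int_eps k r) (rank_sig_int_eps k s) ea eb ers esg.
Qed.
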